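(* Let $n\ge2$ and let $x_1,\dots,x_n,y_1,\dots,y_{n-1}$ be the distinct elements of $[2n-1]$. Let $u$ be the tableau of shape $2^{n-1}1$ with first column $x_1,\dots,x_n$ and second column $y_1,\dots,y_{n-1}$, and for $i\in[n]$ let $s_i$ be the tableau of shape $2^{n-1}1$ with first column $y_1,\dots,y_{n-1},x_i$ and second column $x_1,\dots,\widehat{x_i},\dots,x_n$ (top to bottom). Then in $S^{2^{n-1}1}$, \[\varepsilon_u=\sum_{i=1}^n(-1)^{n-i}\varepsilon_{s_i}.\] Consequently $\tilde\Psi\circ\varphi=0$ on $V_{n,3}$.
   Context: For a tableau $t$ (filling of a Young diagram using each element of $[N]$ once) with column stabilizer $C_t$, $\{t\}$ is its row tabloid and $\varepsilon_t=\sum_{\beta\in C_t}\operatorname{sgn}(\beta)\{\beta t\}$; $S^\lambda$ is the Specht module spanned by the $\varepsilon_t$. $V_{n,3}$ is the $\mathbb C$-span of left-comb brackets $[[x_1,\dots,x_n],y_1,\dots,y_{n-1}]$ with $\{x_i\}\cup\{y_j\}=[2n-1]$, modulo antisymmetry in the $x$'s and separately in the $y$'s. $\varphi:V_{n,3}\to V_{n,3}$ is $\varphi([[x_1,\dots,x_n],y_1,\dots,y_{n-1}])=[[x_1,\dots,x_n],y_1,\dots,y_{n-1}]-\sum_{i=1}^n(-1)^{n-i}[[y_1,\dots,y_{n-1},x_i],x_1,\dots,\widehat{x_i},\dots,x_n]$, and $\tilde\Psi:V_{n,3}\to S^{2^{n-1}1}$ sends $[[x_1,\dots,x_n],y_1,\dots,y_{n-1}]$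 to $\varepsilon_t$, $t$ the tableau with first column the $x$'s and second column the $y$'s. *)

From HB Require Import structures.
From mathcomp Require Import all_boot all_order all_algebra all_fingroup.
Set Implicit Arguments. Unset Strict Implicit. Unset Printing Implicit Defensive.
Import GRing.Theory.
Local Open Scope ring_scope.

(* A tableau with entries in [N] = 'I_N, given as the list of its rows
   (top to bottom), each row listed left to right. *)
Definition tableau (N : nat) := seq (seq 'I_N).

Definition row_of N (t : tableau N) (x : 'I_N) : nat := find (fun r => x \in r) t.
Definition col_of N (t : tableau N) (x : 'I_N) : nat :=
  index x (nth [::] t (row_of t x)).

(* Row tabloids {t}: a tabloid is determined by the row in which each entry lies.
   We encode it as the function entry |-> row index (rows are < N+1 for tableaux
   of size N). *)
Definition tabloid N := {ffun 'I_N -> 'I_N.+1}.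
Definition tabloid_of N (t : tableau N) : tabloid N :=
  [ffun x => inord (row_of t x)].

Definition act_tab N (beta : {perm 'I_N}) (t : tableau N) : tableau N :=
  map (map beta) t.

Definition col_stab N (t : tableau N) : {set {perm 'I_N}} :=
  [set beta : {perm 'I_N} | [forall x, col_of t (beta x) == col_of t x]].

(* Elements of the permutation module M^lambda (formal R-linear combinations of
   tabloids) are represented by their coefficient functions. *)
Definition tabloid_module (R : nzRingType) N := {ffun tabloid N -> R}.

Definition polytabloid (R : nzRingType) N (t : tableau N) : tabloid_module R N :=
  [ffun T => \sum_(beta in col_stab t)
                (-1) ^+ (odd_perm beta) * (T == tabloid_of (act_tab beta t))%:R].

(* The tableau of shape 2^(size c2) 1^(size c1 - size c2) with first column c1
   and second column c2 (each listed top to bottom), assuming size c2 <= size c1. *)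
Definition tab_of_cols N (c1 c2 : seq 'I_N) : tableau N :=
  [seq [:: p.1; p.2] | p <- zip c1 c2] ++ [seq [:: a] | a <- drop (size c2) c1].

From HB Require Import structures.
From mathcomp Require Import all_boot all_order all_algebra all_fingroup.
From mathcomp Require Import zify ring.
Set Implicit Arguments. Unset Strict Implicit. Unset Printing Implicit Defensive.
Import GRing.Theory.
Local Open Scope ring_scope.

(** Over the integers, [eps_t] evaluated at a tabloid [T] is a determinant:
   [sum_beta sgn beta * prod_w [col (beta w) = col w] * [T (beta w) = row w]],
   whose terms vanish unless [beta] lies in [C_t] and [T = {beta t}].  For a
   two-column tableau, listing the entries first column first makes this matrix
   block diagonal, so [eps_t T = det P * det Q], where [P] and [Q] record the
   rows that [T] assigns to the entries of the first and second column.  The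
   relation [eps_u = sum_i (-1)^(n-i) eps_(s_i)] thus becomes Sylvester's
   exchange identity [det P * det Q = sum_i +- det [Q | p_i] * det (P - p_i)],
   obtained by expanding [det P * det [Q | e_n]] through the adjugate of [P]. *)

Lemma prodr_nat_bool (R : comPzSemiRingType) (I : finType) (P : pred I) :
  \prod_(i : I) (P i)%:R = [forall i, P i]%:R :> R.
Proof.
have [/forallP P_all | /forallPn [i not_Pi]] := boolP [forall i, P i].
  by rewrite big1 // => i _; rewrite P_all.
by rewrite (bigD1 i) //= (negbTE not_Pi) mul0r.
Qed.

Lemma det_conj_inj (R : comNzRingType) n N (nN : n = N) (f : 'I_n -> 'I_N)
    (f_inj : injective f) (A : 'M[R]_N) :
  \det (\matrix_(i, j) A (f i) (f j)) = \det A.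
Proof.
case: N / nN in f f_inj A *.
have -> : \matrix_(i, j) A (f i) (f j) = row_perm (perm f_inj) (col_perm (perm f_inj) A).
  by apply/matrixP => i j; rewrite !mxE !permE.
rewrite row_permE col_permE !det_mulmx !det_perm odd_permV.
by rewrite mulrCA -signr_addb addbb mulr1.
Qed.

Lemma row_of_act N (t : tableau N) (beta : {perm 'I_N}) (v : 'I_N) :
  row_of (act_tab beta t) (beta v) = row_of t v.
Proof.
rewrite /row_of /act_tab find_map; apply: eq_find => r /=.
by rewrite mem_map //; apply: perm_inj.
Qed.

Lemma polytabloid_intr (R : nzRingType) N (t : tableau N) (T : tabloid N) :
  polytabloid R t T = (polytabloid int t T)%:~R.
Proof.
rewrite /polytabloid !ffunE rmorph_sum; apply: eq_bigr => beta _.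
by rewrite rmorphM rmorph_sign rmorph_nat.
Qed.

Definition polytabloid_mx N (t : tableau N) (T : tabloid N) : 'M[int]_N :=
  \matrix_(w, v) ((col_of t v == col_of t w)%:R * (T v == inord (row_of t w))%:R).

Lemma polytabloid_det N (t : tableau N) (T : tabloid N) :
  polytabloid int t T = \det (polytabloid_mx t T).
Proof.
rewrite /polytabloid ffunE /determinant big_mkcond /=; apply: eq_bigr => beta _.
have -> : \prod_w polytabloid_mx t T w (beta w) =
    [forall w, col_of t (beta w) == col_of t w]%:R *
    [forall w, T (beta w) == inord (row_of t w)]%:R.
  by rewrite -!prodr_nat_bool -big_split; apply: eq_bigr => w _; rewrite mxE.
have -> : (T == tabloid_of (act_tab beta t)) =
    [forall w, T (beta w) == inord (row_of t w)].
  apply/eqP/forallP => [-> w | T_beta].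
    by rewrite /tabloid_of ffunE row_of_act.
  apply/ffunP => v; rewrite /tabloid_of ffunE -{2}(permKV beta v) row_of_act.
  by apply/eqP; rewrite -{1}(permKV beta v) T_beta.
by rewrite inE; case: ifP => _; rewrite ?mul1r // mul0r mulr0.
Qed.

Section TwoColumns.

Variables (N n m : nat) (m_le_n : (m <= n)%N).
Variables (a : 'I_n -> 'I_N) (b : 'I_m -> 'I_N).
Hypotheses (a_inj : injective a) (b_inj : injective b) (ab_neq : forall i j, a i != b j).

Definition two_cols_row (k : 'I_n) : seq 'I_N :=
  a k :: (if insub (val k) is Some k' then [:: b k'] else [::]).

Lemma tab_of_cols_rows :
  tab_of_cols (map a (enum 'I_n)) (map b (enum 'I_m)) = map two_cols_row (enum 'I_n).
Proof.
have size_a : size (map a (enum 'I_n)) = n by rewrite size_map size_enum_ord.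
have size_b : size (map b (enum 'I_m)) = m by rewrite size_map size_enum_ord.
rewrite /tab_of_cols; apply: (@eq_from_nth _ [::]).
  by rewrite size_cat !size_map size_zip size_drop -!enumT !size_enum_ord; lia.
rewrite size_b size_cat !size_map size_zip size_drop size_a size_b => k lt_k.
have lt_kn : (k < n)%N by lia.
pose k_n := Ordinal lt_kn.
have nth_k : nth k_n (enum 'I_n) k = k_n := nth_ord_enum k_n k_n.
rewrite (nth_map k_n) ?size_enum_ord // nth_k nth_cat !size_map size_zip.
rewrite size_a size_b /two_cols_row /=; case: ifP => lt_km.
  have lt_km' : (k < m)%N by lia.
  pose k_m := Ordinal lt_km'.
  have nth_k' : nth k_m (enum 'I_m) k = k_m := nth_ord_enum k_m k_m.
  rewrite (nth_map (a k_n, a k_n)) ?size_zip ?size_a ?size_b //.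
  rewrite nth_zip_cond size_zip size_a size_b lt_km /=.
  by rewrite (nth_map k_n) ?(nth_map k_m) -?enumT ?size_enum_ord // nth_k nth_k' insubT.
rewrite (nth_map (a k_n)) ?size_drop ?size_a; last by lia.
rewrite nth_drop (nth_map k_n) ?size_enum_ord; last by lia.
have -> : (m + (k - minn n m))%N = k by lia.
by rewrite nth_k insubN //=; lia.
Qed.

Let t := tab_of_cols (map a (enum 'I_n)) (map b (enum 'I_m)).

Lemma mem_two_cols_row_a k j : (a k \in two_cols_row j) = (j == k).
Proof.
rewrite /two_cols_row in_cons (inj_eq a_inj) eq_sym.
by case: insub => [k'|] /=; rewrite ?mem_seq1 ?in_nil ?(negbTE (ab_neq _ _)) ?orbF.
Qed.

Lemma mem_two_cols_row_b k j : (b k \in two_cols_row j) = (val j == val k).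
Proof.
rewrite /two_cols_row in_cons eq_sym (negbTE (ab_neq _ _)) /=.
case: insubP => [k' _ <- | j_ge_m] /=; first by rewrite mem_seq1 (inj_eq b_inj) eq_sym.
by apply/esym/negbTE; apply: contra j_ge_m => /eqP ->.
Qed.

Lemma row_of_a k : row_of t (a k) = k.
Proof.
rewrite /row_of /t tab_of_cols_rows find_map.
rewrite (@eq_find _ _ (pred1 k)) => [|j]; last by rewrite /= mem_two_cols_row_a.
exact: index_enum_ord.
Qed.

Lemma row_of_b k : row_of t (b k) = k.
Proof.
rewrite /row_of /t tab_of_cols_rows find_map.
rewrite (@eq_find _ _ (pred1 (widen_ord m_le_n k))) => [|j].
  exact: index_enum_ord.
by rewrite /= mem_two_cols_row_b.
Qed.

Lemma col_of_a k : col_of t (a k) = 0%N.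
Proof.
by rewrite /col_of row_of_a /t tab_of_cols_rows (nth_map k) ?size_enum_ord ?nth_ord_enum
  /= ?eqxx.
Qed.

Lemma col_of_b k : col_of t (b k) = 1%N.
Proof.
have lt_kn : (k < n)%N := leq_trans (ltn_ord k) m_le_n.
rewrite /col_of row_of_b /t tab_of_cols_rows (nth_map (widen_ord m_le_n k)) ?size_enum_ord //.
rewrite -[nat_of_ord k]/(nat_of_ord (widen_ord m_le_n k)) nth_ord_enum.
by rewrite /two_cols_row /= valK /= (negbTE (ab_neq _ _)) eqxx.
Qed.

Hypothesis nmN : (n + m)%N = N.

Definition two_cols_entry (i : 'I_(n + m)) : 'I_N :=
  match split i with inl k => a k | inr k => b k end.

Lemma two_cols_entry_inj : injective two_cols_entry.
Proof.
move=> i j; rewrite -[i]splitK -[j]splitK /two_cols_entry !unsplitK.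
case: (split i) => i'; case: (split j) => j' /= eq_ij.
- by rewrite (a_inj eq_ij).
- by move: (ab_neq i' j'); rewrite eq_ij eqxx.
- by move: (ab_neq j' i'); rewrite eq_ij eqxx.
- by rewrite (b_inj eq_ij).
Qed.

Lemma polytabloid_two_cols (T : tabloid N) :
  polytabloid int t T =
  \det (\matrix_(r, j < n) ((T (a j) == inord r)%:R : int)) *
  \det (\matrix_(r, j < m) ((T (b j) == inord r)%:R : int)).
Proof.
rewrite polytabloid_det -(det_conj_inj nmN two_cols_entry_inj) -(det_ublock _ 0).
congr (\det _); apply/matrixP => i j; rewrite mxE /two_cols_entry mxE.
rewrite -[i]splitK -[j]splitK !unsplitK.
case: (split i) => i'; case: (split j) => j';
  rewrite ?block_mxEul ?block_mxEur ?block_mxEdl ?block_mxEdr !mxE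
    ?col_of_a ?col_of_b ?row_of_a ?row_of_b ?eqxx ?mul1r ?mul0r //.
Qed.

End TwoColumns.

Lemma sylvester_det_exchange (R : comNzRingType) m
    (p : 'I_m.+1 -> nat -> R) (q : 'I_m -> nat -> R) :
  \det (\matrix_(r, j < m.+1) p j r) * \det (\matrix_(r, j < m) q j r) =
  \sum_(i < m.+1) (-1) ^+ (m.+1 - i.+1) *
    (\det (\matrix_(r, j < m.+1) (if unlift ord_max j is Some k then q k r else p i r)) *
     \det (\matrix_(r, j < m) p (lift i j) r)).
Proof.
set P := \matrix_(r, j < m.+1) p j r.
pose Q0 := \matrix_(r, j < m.+1) (if unlift ord_max j is Some k then q k r else 0 : R).
pose kappa r := cofactor Q0 r ord_max.
have det_Q_col i :
    \det (\matrix_(r, j < m.+1) (if unlift ord_max j is Some k then q k r else p i r))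
    = \sum_(r < m.+1) p i r * kappa r.
  rewrite (expand_det_col _ ord_max); apply: eq_bigr => r _.
  rewrite mxE unlift_none /kappa /cofactor; congr (_ * (_ * \det _)).
  by apply/matrixP => r' j'; rewrite !mxE liftK.
have det_Q : \det (\matrix_(r, j < m) q j r) = kappa ord_max.
  rewrite /kappa /cofactor -signr_odd addnn odd_double mul1r.
  by congr (\det _); apply/matrixP => r j; rewrite !mxE liftK lift_max.
have cofactor_P i :
    cofactor P ord_max i = (-1) ^+ (m + i) * \det (\matrix_(r, j < m) p (lift i j) r).
  by rewrite /cofactor; congr (_ * \det _); apply/matrixP => r j; rewrite !mxE lift_max.
(* [kappa] is the linear form [v |-> det [Q | v]]; apply it to the last column
   of [P *m \adj P = (det P)%:M]. *)
have expand : \det P * kappa ord_max =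
    \sum_i (\sum_(r < m.+1) p i r * kappa r) * cofactor P ord_max i.
  transitivity (\sum_(r < m.+1) kappa r * (P *m \adj P) r ord_max).
    rewrite mul_mx_adj (bigD1 ord_max) //= big1 => [|r r_neq]; last first.
      by rewrite mxE (negbTE r_neq) mulr0n mulr0.
    by rewrite mxE eqxx mulr1n addr0 mulrC.
  under [RHS]eq_bigr do rewrite mulr_suml.
  rewrite exchange_big; apply: eq_bigr => r _.
  rewrite mxE mulr_sumr; apply: eq_bigr => i _; rewrite !mxE; ring.
rewrite det_Q expand; apply: eq_bigr => i _.
rewrite det_Q_col cofactor_P mulrA mulrA [_ * (-1) ^+ _]mulrC; congr (_ * _ * _).
rewrite subSS -signr_odd -[in RHS]signr_odd oddB ?oddD //.
by rewrite -ltnS ltn_ord.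
Qed.

Lemma filter_enum_ord_neq m (i : 'I_m.+1) :
  [seq j <- enum 'I_m.+1 | j != i] = map (lift i) (enum 'I_m).
Proof.
have ltn_trans' : transitive (fun u v : 'I_m.+1 => (u < v)%N).
  by move=> ? ? ?; apply: ltn_trans.
have enum_sorted k : sorted (fun u v : 'I_k => (u < v)%N) (enum 'I_k).
  by have := iota_ltn_sorted 0 k; rewrite -val_enum_ord sorted_map.
apply: (irr_sorted_eq ltn_trans') => [u | | | z].
- by rewrite /= ltnn.
- by apply: sorted_filter; [apply: ltn_trans' | apply: enum_sorted].
- rewrite sorted_map; apply: sub_sorted (enum_sorted m) => u v /=.
  by rewrite /bump; case: leqP => ?; case: leqP => ?; lia.
- rewrite mem_filter mem_enum andbT.
  case: (unliftP i z) => [k -> | ->].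
    by rewrite eq_sym neq_lift mem_map ?mem_enum //; apply: lift_inj.
  rewrite eqxx; apply/esym/mapP => [[k _ i_lift]].
  by move: (neq_lift i k); rewrite -i_lift eqxx.
Qed.

Lemma rcons_map_enum_ord (T : Type) m (f : 'I_m -> T) (z : T) :
  rcons (map f (enum 'I_m)) z =
  map (fun j : 'I_m.+1 => if unlift ord_max j is Some k then f k else z) (enum 'I_m.+1).
Proof.
rewrite enum_ordSr map_rcons -map_comp unlift_none; congr rcons; apply: eq_map => k /=.
have -> : widen_ord (leqnSn m) k = lift ord_max k by apply: ord_inj; rewrite lift_max.
by rewrite liftK.
Qed.

Theorem mainTheorem10 (R : nzRingType) (n : nat) (n_ge2 : (2 <= n)%N)
    (x : 'I_n -> 'I_(2 * n).-1) (y : 'I_n.-1 -> 'I_(2 * n).-1)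
    (x_inj : injective x) (y_inj : injective y)
    (xy_disj : forall i j, x i != y j) :
  let u := tab_of_cols [seq x i | i <- enum 'I_n] [seq y j | j <- enum 'I_n.-1] in
  let s := fun i : 'I_n =>
    tab_of_cols (rcons [seq y j | j <- enum 'I_n.-1] (x i))
                [seq x j | j <- enum 'I_n & j != i] in
  polytabloid R u =
  [ffun T => \sum_(i < n) (-1) ^+ (n - i.+1) * polytabloid R (s i) T].
Proof.
case: n => [|m] in n_ge2 x y x_inj y_inj xy_disj * => // u s.
apply/ffunP => T; rewrite polytabloid_intr [RHS]ffunE.
have size_N : (m.+1 + m)%N = (2 * m.+1).-1 by lia.
pose c i (j : 'I_m.+1) := if unlift ord_max j is Some k then y k else x i.
have c_inj i : injective (c i).
  move=> j1 j2; rewrite /c.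
  case: (unliftP ord_max j1) => [k1 ->|->]; case: (unliftP ord_max j2) => [k2 ->|->];
    rewrite ?liftK ?unlift_none => eq_c //; first by rewrite (y_inj _ _ eq_c).
    by move: (xy_disj i k1); rewrite eq_c eqxx.
  by move: (xy_disj i k2); rewrite eq_c eqxx.
have xlift_inj i : injective (x \o lift i) by move=> j1 j2 /x_inj /lift_inj.
have c_neq_xlift i j k : c i j != (x \o lift i) k.
  rewrite /c /=; case: unlift => [k'|]; first by rewrite eq_sym xy_disj.
  by rewrite (inj_eq x_inj) neq_lift.
have s_cols i : s i = tab_of_cols (map (c i) (enum 'I_m.+1)) (map (x \o lift i) (enum 'I_m)).
  by rewrite /s rcons_map_enum_ord filter_enum_ord_neq -map_comp.
rewrite /u (polytabloid_two_cols (leqnSn m) x_inj y_inj xy_disj size_N).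
rewrite (sylvester_det_exchange (fun j r => (T (x j) == inord r)%:R)
  (fun j r => (T (y j) == inord r)%:R)) rmorph_sum.
apply: eq_bigr => i _; rewrite polytabloid_intr rmorphM rmorph_sign; congr (_ * _%:~R).
rewrite s_cols (polytabloid_two_cols (leqnSn m) (c_inj i) (xlift_inj i) (c_neq_xlift i) size_N).
by congr (\det _ * _); apply/matrixP => r j; rewrite !mxE /c; case: unlift.
Qed.
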